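(* Let $\mathcal{H}$ be a finite-dimensional Hilbert space, $\{\rho_\theta;\theta\in\Theta\subset\mathbb{R}^d\}$ a smooth family of density operators, $\theta_0\in\Theta$ with $\rho=\rho_{\theta_0}$ strictly positive, and suppose the SLD tangent space at $\theta_0$ has a $\mathcal{D}_\rho$ invariant extension. Then for every $d\times d$ real positive matrix $G$ and every $\beta\in[0,1]$, $$C^{(H)}_{\theta_0,G}\ \ge\ C^{(\beta)}_{\theta_0,G}.$$
   Context: $\partial_i\rho=\frac{\partial}{\partial\theta^i}\rho_\theta|_{\theta=\theta_0}$. SLDs $L_i^{(S)}$: Hermitian with $\partial_i\rho=\frac12(\rho L_i^{(S)}+L_i^{(S)}\rho)$, assumed linearly independent; SLD tangent space $\mathcal{T}=\operatorname{span}_{\mathbb{R}}\{L_i^{(S)}\}$. Commutation operator: $\mathcal{D}_\rho(X)\rho+\rho\mathcal{D}_\rho(X)=\sqrt{-1}(X\rho-\rho X)$; a $\mathcal{D}_\rho$ invariant extension of $\mathcal{T}$ is a real subspace of Hermitian operators containing $\mathcal{T}$ and mapped into itself by $\mathcal{D}_\rho$. For $\beta\in[0,1]$, $L_i^{(\beta)}$ is defined by $\partial_i\rho=\frac{1+\beta}{2}\rho L_i^{(\beta)}+\frac{1-\beta}{2}L_i^{(\beta)}\rho$, $J^{(\beta)}_{\theta_0}=[\operatorname{Tr}\partial_i\rho\,L_j^{(\beta)}]_{ij}$, and $C^{(\beta)}_{\theta_0,G}=\operatorname{Tr}G(J^{(\beta)}_{\theta_0})^{-1}+\operatorname{Tr}|\sqrt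 G\,\operatorname{Im}(J^{(\beta)}_{\theta_0})^{-1}\sqrt G|$. Holevo bound: $C^{(H)}_{\theta_0,G}=\min_B\{\operatorname{Tr}GZ(B)+\operatorname{Tr}|\sqrt G\operatorname{Im}Z(B)\sqrt G|\}$ over Hermitian $B_1,\dots,B_d$ with $\operatorname{Tr}\partial_i\rho\,B_j=\delta_{ij}$, $Z_{ij}(B)=\operatorname{Tr}\rho B_jB_i$. Im entrywise; $|X|=(X^*X)^{1/2}$. *)

(* finite-dimensional quantum estimation, over an arbitrary
   numClosedFieldType C (e.g. algC); operators on H = C^n are 'M[C]_n. *)
From Stdlib Require Import ClassicalEpsilon.
From HB Require Import structures.
From mathcomp Require Import all_boot all_order all_algebra.
Set Implicit Arguments. Unset Strict Implicit. Unset Printing Implicit Defensive.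
Import Order.TTheory GRing.Theory Num.Theory.
Local Open Scope ring_scope.

Section QDefs.
Variable C : numClosedFieldType.

Definition adj m p (A : 'M[C]_(m, p)) : 'M[C]_(p, m) := (map_mx Num.conj A)^T.

Definition herm n (A : 'M[C]_n) : Prop := adj A = A.

Definition psd n (A : 'M[C]_n) : Prop :=
  herm A /\ forall v : 'cV[C]_n, 0 <= (adj v *m A *m v) 0 0.

Definition posdef n (A : 'M[C]_n) : Prop :=
  herm A /\ forall v : 'cV[C]_n, v != 0 -> 0 < (adj v *m A *m v) 0 0.

Definition psd_sqrt n (A : 'M[C]_n) : 'M[C]_n :=
  epsilon (inhabits 0) (fun S => psd S /\ S *m S = A).

Definition trabs n (X : 'M[C]_n) : C := \tr (psd_sqrt (adj X *m X)).

Definition Im_mx m p (A : 'M[C]_(m, p)) : 'M[C]_(m, p) := map_mx (fun z => 'Im z) A.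

Definition is_SLD n (rho D L : 'M[C]_n) : Prop :=
  herm L /\ D = 2^-1 *: (rho *m L + L *m rho).

Definition is_Lbeta n (beta : C) (rho D L : 'M[C]_n) : Prop :=
  D = ((1 + beta) / 2) *: (rho *m L) + ((1 - beta) / 2) *: (L *m rho).

Definition real_lin_indep n d (L : 'I_d -> 'M[C]_n) : Prop :=
  forall c : 'I_d -> C, (forall i, c i \is Num.real) ->
    \sum_i c i *: L i = 0 -> forall i, c i = 0.

Definition SLD_tangent n d (L : 'I_d -> 'M[C]_n) (X : 'M[C]_n) : Prop :=
  exists c : 'I_d -> C, (forall i, c i \is Num.real) /\ X = \sum_i c i *: L i.

(* Y = D_ρ(X) :  Y ρ + ρ Y = sqrt(-1) (X ρ - ρ X) *)
Definition commD n (rho X Y : 'M[C]_n) : Prop :=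
  Y *m rho + rho *m Y = 'i *: (X *m rho - rho *m X).

Definition real_subspace n (V : 'M[C]_n -> Prop) : Prop :=
  [/\ V 0,
      forall X Y, V X -> V Y -> V (X + Y)
    & forall (a : C) X, a \is Num.real -> V X -> V (a *: X)].

Definition Dinv_extension n d (rho : 'M[C]_n) (L : 'I_d -> 'M[C]_n)
    (V : 'M[C]_n -> Prop) : Prop :=
  [/\ real_subspace V,
      forall X, V X -> herm X,
      forall X, SLD_tangent L X -> V X
    & forall X Y, V X -> commD rho X Y -> V Y].

Definition Jmat n d (D Lb : 'I_d -> 'M[C]_n) : 'M[C]_d :=
  \matrix_(i, j) \tr (D i *m Lb j).

Definition Cbeta d (G J : 'M[C]_d) : C :=
  \tr (G *m invmx J)
  + trabs (psd_sqrt G *m Im_mx (invmx J) *m psd_sqrt G).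

Definition holevo_feasible n d (D B : 'I_d -> 'M[C]_n) : Prop :=
  (forall j, herm (B j)) /\ (forall i j, \tr (D i *m B j) = (i == j)%:R).

Definition Zmat n d (rho : 'M[C]_n) (B : 'I_d -> 'M[C]_n) : 'M[C]_d :=
  \matrix_(i, j) \tr (rho *m B j *m B i).

Definition holevo_fun n d (G : 'M[C]_d) (rho : 'M[C]_n) (B : 'I_d -> 'M[C]_n) : C :=
  \tr (G *m Zmat rho B)
  + trabs (psd_sqrt G *m Im_mx (Zmat rho B) *m psd_sqrt G).

End QDefs.

(* Put a = (1 + β)/2 and b = (1 - β)/2, and consider the inner product
   <X, Y> = a Tr(X^* ρ Y) + b Tr(ρ X^* Y), positive definite since ρ > 0.
   The equation defining L^(β)_i says <L^(β)_i, Y> = Tr(∂_iρ Y), so J^(β) is the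
   Gram matrix of the L^(β)_i, every feasible B is biorthogonal to them, and the
   Gram matrix of B is a Z + b Z^T with Z = Z(B).  Cauchy-Schwarz for biorthogonal
   families gives a Z + b Z^T >= K := (J^(β))^-1.  Conjugate this inequality and
   its transpose by √G and test them against 1 + E and 1 - E, where E is the sign
   of the Hermitian matrix √G (K - K^T)/2 √G = i √G Im K √G.  As a - b = β,
   Tr G K + Tr|√G Im K √G| <= Tr G Z + β Tr(E i √G Im Z √G)
                            <= Tr G Z + Tr|√G Im Z √G|. *)

From Stdlib Require Import ClassicalEpsilon.
From mathcomp Require Import all_boot all_order all_algebra spectral.
From mathcomp Require Import ring.
Import Order.TTheory GRing.Theory Num.Theory.
Local Open Scope ring_scope.

Set Implicit Arguments. Unset Strict Implicit. Unset Printing Implicit Defensive.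

Section Adjoint.
Variable C : numClosedFieldType.

Lemma adjmxE m p (A : 'M[C]_(m, p)) i j : adj A i j = (A j i)^*.
Proof. by rewrite /adj !mxE. Qed.

Lemma adjmxK m p (A : 'M[C]_(m, p)) : adj (adj A) = A.
Proof. by apply/matrixP => i j; rewrite !adjmxE conjCK. Qed.

Lemma adjmxM m p q (A : 'M[C]_(m, p)) (B : 'M[C]_(p, q)) :
  adj (A *m B) = adj B *m adj A.
Proof. by rewrite /adj map_mxM trmx_mul. Qed.

Lemma adjmxD m p (A B : 'M[C]_(m, p)) : adj (A + B) = adj A + adj B.
Proof. by apply/matrixP => i j; rewrite !mxE rmorphD. Qed.

Lemma adjmxB m p (A B : 'M[C]_(m, p)) : adj (A - B) = adj A - adj B.
Proof. by apply/matrixP => i j; rewrite !mxE rmorphB. Qed.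

Lemma adjmxZ m p a (A : 'M[C]_(m, p)) : adj (a *: A) = a^* *: adj A.
Proof. by apply/matrixP => i j; rewrite !mxE rmorphM. Qed.

Lemma adjmx1 m : adj (1%:M : 'M[C]_m) = 1%:M.
Proof. by apply/matrixP => i j; rewrite adjmxE !mxE eq_sym rmorph_nat. Qed.

Lemma adjmx_trmx m (A : 'M[C]_m) : adj A^T = (adj A)^T.
Proof. by apply/matrixP => i j; rewrite !mxE. Qed.

Lemma mxtrace_adjmx m (A : 'M[C]_m) : \tr (adj A) = (\tr A)^*.
Proof. by rewrite /mxtrace rmorph_sum; apply: eq_bigr => i _; rewrite adjmxE. Qed.

Lemma adjmx_diag m (s : 'rV[C]_m) : adj (diag_mx s) = diag_mx (map_mx Num.conj s).
Proof.
by apply/matrixP => i j; rewrite adjmxE !mxE rmorphMn eq_sym; case: eqP => // ->.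
Qed.

Lemma adjmx_inv m (A : 'M[C]_m) : adj (invmx A) = invmx (adj A).
Proof. by rewrite /adj map_invmx trmx_inv. Qed.

Lemma sesq_formE m (u v : 'cV[C]_m) (M : 'M[C]_m) :
  (adj u *m M *m v) 0 0 = \sum_i \sum_j (u i 0)^* * M i j * v j 0.
Proof.
rewrite mxE exchange_big; apply: eq_bigr => j _; rewrite !mxE big_distrl /=.
by apply: eq_bigr => i _; rewrite adjmxE.
Qed.

Lemma adj_mulmx_selfE m (v : 'cV[C]_m) : (adj v *m v) 0 0 = \sum_i `|v i 0| ^+ 2.
Proof. by rewrite mxE; apply: eq_bigr => i _; rewrite adjmxE normCK mulrC. Qed.

Lemma adj_mulmx_self_ge0 m (v : 'cV[C]_m) : 0 <= (adj v *m v) 0 0.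
Proof. by rewrite adj_mulmx_selfE; apply: sumr_ge0 => i _; rewrite exprn_ge0. Qed.

Lemma adj_mulmx_self_eq0 m (v : 'cV[C]_m) : (adj v *m v) 0 0 = 0 -> v = 0.
Proof.
rewrite adj_mulmx_selfE => /psumr_eq0P v0; apply/matrixP => i j; rewrite ord1 mxE.
have /eqP : `|v i 0| ^+ 2 = 0 by apply: v0 => // k _; exact: exprn_ge0.
by rewrite sqrf_eq0 normr_eq0 => /eqP.
Qed.

Lemma mulmx3_diagE m p (M : 'M[C]_(m, p)) (A : 'M[C]_p) (N : 'M[C]_(p, m)) k :
  (M *m A *m N) k k = (row k M *m A *m col k N) 0 0.
Proof.
rewrite !mxE; apply: eq_bigr => j _; rewrite !mxE; congr (_ * _).
by apply: eq_bigr => i _; rewrite !mxE.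
Qed.

Lemma row_adjmx m p (M : 'M[C]_(m, p)) k : row k M = adj (col k (adj M)).
Proof. by apply/matrixP => i j; rewrite !mxE conjCK. Qed.

End Adjoint.

Section Positive.
Variable C : numClosedFieldType.

Lemma psd_conj_diag_ge0 m p (A : 'M[C]_p) (M : 'M[C]_(m, p)) k :
  psd A -> 0 <= (M *m A *m adj M) k k.
Proof. by move=> [_ A_ge0]; rewrite mulmx3_diagE row_adjmx. Qed.

Lemma psd_mxtrace_ge0 m (A : 'M[C]_m) : psd A -> 0 <= \tr A.
Proof.
move=> pA; apply: sumr_ge0 => k _.
by have := psd_conj_diag_ge0 1%:M k pA; rewrite adjmx1 mul1mx mulmx1.
Qed.

Lemma posdef_psd m (A : 'M[C]_m) : posdef A -> psd A.
Proof.
case=> hA A_gt0; split=> // v; have [->|v_neq0] := eqVneq v 0; last exact/ltW/A_gt0.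
by rewrite mulmx0 mxE.
Qed.

Lemma psd_adj_mulmx m p (X : 'M[C]_(m, p)) : psd (adj X *m X).
Proof.
split; first by rewrite /herm adjmxM adjmxK.
by move=> v; rewrite mulmxA -adjmxM -mulmxA adj_mulmx_self_ge0.
Qed.

Lemma psd_adj_conj m p (A : 'M[C]_p) (X : 'M[C]_(p, m)) : psd A -> psd (adj X *m A *m X).
Proof.
move=> [hA A_ge0]; split; first by rewrite /herm !adjmxM adjmxK hA mulmxA.
by move=> v; have := A_ge0 (X *m v); rewrite adjmxM !mulmxA.
Qed.

Lemma psd_herm_conj m (A g : 'M[C]_m) : psd A -> herm g -> psd (g *m A *m g).
Proof. by move=> pA hg; rewrite -{1}hg; apply: psd_adj_conj. Qed.

Lemma mxtrace_adj_conjE m p (A : 'M[C]_p) (X : 'M[C]_(p, m)) :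
  \tr (adj X *m A *m X) = \sum_k (adj (col k X) *m A *m col k X) 0 0.
Proof. by apply: eq_bigr => k _; rewrite [LHS]mulmx3_diagE row_adjmx adjmxK. Qed.

(* [v^* A^T v = w^* A w] for the entrywise conjugate [w] of [v]. *)
Lemma psd_trmx m (A : 'M[C]_m) : psd A -> psd A^T.
Proof.
move=> [hA A_ge0]; split; first by rewrite /herm adjmx_trmx hA.
move=> v; have := A_ge0 (adj v)^T.
suff -> : (adj (adj v)^T *m A *m (adj v)^T) 0 0 = (adj v *m A^T *m v) 0 0 by [].
rewrite !sesq_formE exchange_big; apply: eq_bigr => i _; apply: eq_bigr => j _.
by rewrite !mxE conjCK; ring.
Qed.

End Positive.

Section Spectral.
Variable C : numClosedFieldType.

Definition udiag n (P : 'M[C]_n) (s : 'rV[C]_n) := adj P *m diag_mx s *m P.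

Section Unitary.
Variables (n : nat) (P : 'M[C]_n).
Hypotheses (PPt : P *m adj P = 1%:M) (PtP : adj P *m P = 1%:M).

Lemma udiagM (s t : 'rV[C]_n) : udiag P s *m udiag P t = udiag P (\row_k (s 0 k * t 0 k)).
Proof.
rewrite /udiag !mulmxA -[adj P *m _ *m P *m adj P]mulmxA PPt mulmx1.
by rewrite -[adj P *m _ *m _]mulmxA mulmx_diag.
Qed.

Lemma mxtrace_udiag (s : 'rV[C]_n) : \tr (udiag P s) = \sum_k s 0 k.
Proof. by rewrite /udiag mxtrace_mulC mulmxA PPt mul1mx mxtrace_diag. Qed.

Lemma udiagD (s t : 'rV[C]_n) : udiag P (s + t) = udiag P s + udiag P t.
Proof. by rewrite /udiag linearD /= mulmxDr mulmxDl. Qed.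

Lemma udiagB (s t : 'rV[C]_n) : udiag P (s - t) = udiag P s - udiag P t.
Proof. by rewrite /udiag linearB /= mulmxBr mulmxBl. Qed.

Lemma udiag1 : udiag P (const_mx 1) = 1%:M.
Proof. by rewrite /udiag diag_const_mx mul_mx_scalar scale1r PtP. Qed.

Lemma udiagK (s : 'rV[C]_n) : P *m udiag P s *m adj P = diag_mx s.
Proof. by rewrite /udiag !mulmxA PPt mul1mx -mulmxA PPt mulmx1. Qed.

Lemma udiag_psd (s : 'rV[C]_n) : (forall k, 0 <= s 0 k) -> psd (udiag P s).
Proof.
move=> s_ge0; split.
  rewrite /herm /udiag !adjmxM adjmxK adjmx_diag mulmxA.
  congr (_ *m diag_mx _ *m _); apply/matrixP => i k; rewrite ord1 !mxE.
  exact/CrealP/ger0_real.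
move=> v; rewrite /udiag !mulmxA -adjmxM -!mulmxA mulmxA sesq_formE.
apply: sumr_ge0 => i _; apply: sumr_ge0 => j _; rewrite [diag_mx s i j]mxE.
have [<-|_] := eqVneq i j; last by rewrite mulr0n mulr0 mul0r.
by rewrite mulr1n mulrAC [(_ i 0)^* * _]mulrC -normCK mulr_ge0 ?exprn_ge0.
Qed.

Lemma psd_udiag_ge0 (s : 'rV[C]_n) : psd (udiag P s) -> forall k, 0 <= s 0 k.
Proof.
move=> pA k; have := psd_conj_diag_ge0 P k pA.
by rewrite udiagK mxE eqxx mulr1n.
Qed.

End Unitary.

Lemma herm_spectral n (A : 'M[C]_n) : herm A ->
  exists P : 'M[C]_n, exists s : 'rV[C]_n,
  [/\ P *m adj P = 1%:M, adj P *m P = 1%:M, forall k, s 0 k \is Num.real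
    & A = udiag P s].
Proof.
move=> hA; have nA : A \is normalmx.
  by apply/normalmxP; rewrite -map_trmx; change (A *m adj A = adj A *m A); rewrite hA.
have /orthomx_spectralP eqA := nA.
set P := spectralmx A in eqA; set s := spectral_diag A in eqA.
have uP : P \is unitarymx by exact: spectral_unitarymx.
have PPt : P *m adj P = 1%:M by move/unitarymxP: uP; rewrite -map_trmx.
have iP : invmx P = adj P by rewrite invmx_unitary // -map_trmx.
have PtP : adj P *m P = 1%:M by rewrite -iP mulVmx // spectral_unit.
have eAs : A = udiag P s by rewrite /udiag -iP.
exists P, s; split => // k.
have : adj (diag_mx s) = diag_mx s.
  by rewrite -(udiagK PPt) -eAs !adjmxM adjmxK hA mulmxA.
by move/matrixP/(_ k k); rewrite adjmx_diag !mxE eqxx !mulr1n => /CrealP.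
Qed.

End Spectral.

Section SquareRoot.
Variable C : numClosedFieldType.

Lemma psd_sqrt_spec n (A : 'M[C]_n) :
  psd A -> psd (psd_sqrt A) /\ psd_sqrt A *m psd_sqrt A = A.
Proof.
move=> pA; apply: (epsilon_spec _ (fun S => psd S /\ S *m S = A)).
have [P [s [PPt PtP _ eA]]] := herm_spectral pA.1; rewrite eA in pA *.
have s_ge0 := psd_udiag_ge0 PPt pA.
exists (udiag P (map_mx sqrtC s)); split.
  by apply: udiag_psd => // k; rewrite mxE sqrtC_ge0.
rewrite udiagM //; congr (udiag P _); apply/matrixP => i k.
by rewrite ord1 !mxE -expr2 sqrtCK.
Qed.

Lemma psd_sqr_eigenvector n (S : 'M[C]_n) (v : 'cV[C]_n) (t : C) :
  psd S -> 0 <= t -> S *m (S *m v) = t ^+ 2 *: v -> S *m v = t *: v.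
Proof.
move=> pS t_ge0 SSv; set w := S *m v - t *: v.
have Sw : S *m w = - (t *: w).
  by rewrite mulmxBr SSv -scalemxAr scalerBr scalerA -expr2 opprB.
suff /eqP : w = 0 by rewrite subr_eq0 => /eqP.
apply: adj_mulmx_self_eq0; have [t0|t_neq0] := eqVneq t 0.
  have wE : w = S *m v by rewrite /w t0 scale0r subr0.
  by rewrite {1}wE adjmxM pS.1 -mulmxA Sw t0 scale0r oppr0 mulmx0 mxE.
apply/eqP; rewrite eq_le adj_mulmx_self_ge0 andbT.
have := pS.2 w; rewrite -mulmxA Sw mulmxN -scalemxAr !mxE oppr_ge0.
by rewrite pmulr_rle0 // lt_def t_neq0.
Qed.

Lemma psd_sqrt_udiag_sqr n (P : 'M[C]_n) (t : 'rV[C]_n) :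
  P *m adj P = 1%:M -> adj P *m P = 1%:M -> (forall k, 0 <= t 0 k) ->
  psd_sqrt (udiag P t *m udiag P t) = udiag P t.
Proof.
move=> PPt PtP t_ge0; set T := udiag P t.
have hT : herm T := (udiag_psd P t_ge0).1.
have [pS SS] := psd_sqrt_spec (psd_adj_mulmx T); rewrite hT in pS SS.
set S := psd_sqrt _ in pS SS *.
have TPt : T *m adj P = adj P *m diag_mx t by rewrite -mulmxA PPt mulmx1.
suff SPt : S *m adj P = adj P *m diag_mx t.
  by rewrite /T /udiag -SPt -mulmxA PtP mulmx1.
apply/matrixP => i k; set v := col k (adj P).
have colPt M : M *m v = col k (M *m adj P) by rewrite /v !colE mulmxA.
have colPtd : col k (adj P *m diag_mx t) = t 0 k *: v.
  by apply/matrixP => j l; rewrite mul_mx_diag !mxE mulrC.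
have Tv : T *m v = t 0 k *: v by rewrite colPt TPt colPtd.
have Sv : S *m v = t 0 k *: v.
  apply: psd_sqr_eigenvector => //.
  by rewrite mulmxA SS -mulmxA Tv -scalemxAr Tv scalerA -expr2.
by have := congr1 (fun M : 'cV[C]_n => M i 0) Sv; rewrite colPt -colPtd !mxE => ->.
Qed.

Lemma mxtrace_psd_mul_ge0 n (A Q : 'M[C]_n) : psd A -> psd Q -> 0 <= \tr (A *m Q).
Proof.
move=> pA pQ; have [pS SS] := psd_sqrt_spec pA; set S := psd_sqrt A in pS SS.
rewrite -SS -mulmxA mxtrace_mulC.
exact: psd_mxtrace_ge0 (psd_herm_conj pQ pS.1).
Qed.

End SquareRoot.

Section AbsoluteValue.
Variable C : numClosedFieldType.

Definition absmx n (H : 'M[C]_n) := psd_sqrt (H *m H).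

Definition contraction n (E : 'M[C]_n) := psd (1%:M + E) /\ psd (1%:M - E).

Lemma psd_absmx n (H : 'M[C]_n) : herm H -> psd (absmx H).
Proof. by move=> hH; have := (psd_sqrt_spec (psd_adj_mulmx H)).1; rewrite hH. Qed.

(* [E] is the sign of [H], computed in an eigenbasis of [H]. *)
Lemma herm_absmx_spec n (H : 'M[C]_n) : herm H ->
  [/\ psd (absmx H + H), psd (absmx H - H)
    & exists2 E, contraction E & \tr (E *m H) = \tr (absmx H)].
Proof.
move=> hH; have [P [s [PPt PtP s_real ->]]] := herm_spectral hH.
set a := map_mx (@Num.norm C C) s; have a_ge0 k : 0 <= a 0 k by rewrite mxE.
have -> : absmx (udiag P s) = udiag P a.
  rewrite /absmx -[RHS](psd_sqrt_udiag_sqr PPt PtP a_ge0) !udiagM //.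
  by congr (psd_sqrt (udiag P _)); apply/matrixP => i k; rewrite !mxE -!expr2 real_normK.
split.
- rewrite -udiagD; apply: udiag_psd => k; rewrite !mxE.
  rewrite -[X in _ + X]opprK subr_ge0 lerNl.
  exact: real_lerNnormlW (s_real k) (lexx _).
- by rewrite -udiagB; apply: udiag_psd => k; rewrite !mxE subr_ge0 real_ler_norm.
exists (udiag P (\row_k (if 0 <= s 0 k then 1 else -1))).
  by split; rewrite -(udiag1 PtP) -?udiagD -?udiagB; apply: udiag_psd => k;
    rewrite !mxE; case: ifP; rewrite ?subrr ?opprK ?addrN // addr_ge0 ?ler01.
rewrite udiagM // !mxtrace_udiag //; apply: eq_bigr => k _; rewrite !mxE.
case: ifP => [s_ge0|s_lt0]; first by rewrite mul1r ger0_norm.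
by rewrite mulN1r ltr0_norm // real_ltNge ?s_lt0.
Qed.

Lemma contraction_mxtrace_le n (E Q1 Q2 : 'M[C]_n) :
  contraction E -> psd Q1 -> psd Q2 -> \tr (E *m (Q2 - Q1)) <= \tr Q1 + \tr Q2.
Proof.
case=> pE mE pQ1 pQ2; rewrite -subr_ge0.
have -> : \tr Q1 + \tr Q2 - \tr (E *m (Q2 - Q1))
        = \tr ((1%:M + E) *m Q1) + \tr ((1%:M - E) *m Q2).
  rewrite mulmxDl mulmxBl mulmxBr !mul1mx !raddfB /= !mxtraceD; ring.
by rewrite addr_ge0 ?mxtrace_psd_mul_ge0.
Qed.

Lemma contraction_mxtrace_absmx_le n (E H : 'M[C]_n) :
  contraction E -> herm H -> \tr (E *m H) <= \tr (absmx H).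
Proof.
move=> hE hH; have [pp pm _] := herm_absmx_spec hH.
have := contraction_mxtrace_le hE pm pp.
rewrite addrC opprB addrA subrK mulmxDr raddfB /= !mxtraceD -mulr2n.
have -> : \tr (absmx H) - \tr H + (\tr (absmx H) + \tr H) = \tr (absmx H) *+ 2.
  by rewrite mulr2n; ring.
by rewrite lerMn2r.
Qed.

End AbsoluteValue.

Section HolevoTerm.
Variable C : numClosedFieldType.

Definition skew_part n (M : 'M[C]_n) := 2^-1 *: (M - M^T).

Lemma herm_skew_part n (M : 'M[C]_n) : herm M -> herm (skew_part M).
Proof.
move=> hM; rewrite /herm /skew_part adjmxZ adjmxB adjmx_trmx hM.
by rewrite fmorphV rmorph_nat.
Qed.

Lemma Im_mx_herm n (M : 'M[C]_n) : herm M -> 'i *: Im_mx M = skew_part M.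
Proof.
move=> hM; apply/matrixP => i j; rewrite !mxE.
have -> : M j i = (M i j)^* by rewrite -[M in LHS]hM adjmxE.
have i2 : 'i * 'i = -1 :> C by rewrite -expr2 sqrCi.
by rewrite ImE !mulrA i2; field.
Qed.

Lemma adjmx_Im_herm n (M : 'M[C]_n) : herm M -> adj (Im_mx M) = - Im_mx M.
Proof.
move=> hM; apply/matrixP => i j; rewrite adjmxE !mxE.
have -> : M j i = (M i j)^* by rewrite -[M in LHS]hM adjmxE.
by rewrite (CrealP (Creal_Im _)) !ImE conjCK; field.
Qed.

(* [X] is skew-adjoint, so [adj X *m X = ('i *: X) *m ('i *: X)]. *)
Lemma trabs_herm_conj_Im n (g M : 'M[C]_n) : herm g -> herm M ->
  trabs (g *m Im_mx M *m g) = \tr (absmx (g *m skew_part M *m g)).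
Proof.
move=> hg hM; set X := g *m Im_mx M *m g.
have skewX : adj X = - X by rewrite !adjmxM hg adjmx_Im_herm // mulNmx mulmxN mulmxA.
rewrite /trabs /absmx -Im_mx_herm // -scalemxAr -scalemxAl -/X skewX.
by rewrite -scalemxAl -scalemxAr scalerA -expr2 sqrCi scaleN1r mulNmx.
Qed.

Definition holevo_term d (G M : 'M[C]_d) : C :=
  \tr (G *m M) + trabs (psd_sqrt G *m Im_mx M *m psd_sqrt G).

Lemma holevo_term_le d (G Z K : 'M[C]_d) (beta : C) :
  G \is a realmx -> psd G -> herm Z -> herm K -> 0 <= beta <= 1 ->
  psd (((1 + beta) / 2) *: Z + ((1 - beta) / 2) *: Z^T - K) ->
  holevo_term G K <= holevo_term G Z.
Proof.
move=> Greal pG hZ hK /andP[beta_ge0 beta_le1] pP.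
set P := _ - K in pP.
have [pg gg] := psd_sqrt_spec pG; set g := psd_sqrt G in pg gg *.
have hg : herm g := pg.1.
have GT : G^T = G by have := pG.1; rewrite /herm /adj realmxC.
have trg M : \tr (g *m M *m g) = \tr (G *m M) by rewrite mxtrace_mulC mulmxA gg.
set H1 := g *m skew_part K *m g; set H2 := g *m skew_part Z *m g.
have hH1 : herm H1 by rewrite /herm !adjmxM hg herm_skew_part // mulmxA.
have hH2 : herm H2 by rewrite /herm !adjmxM hg herm_skew_part // mulmxA.
have [_ _ [E hE EH1]] := herm_absmx_spec hH1.
have trGT M : \tr (G *m M^T) = \tr (G *m M).
  by rewrite -mxtrace_tr trmx_mul trmxK GT mxtrace_mulC.
have trQ : \tr (g *m P *m g) + \tr (g *m P^T *m g) = 2 * (\tr (G *m Z) - \tr (G *m K)).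
  rewrite !trg trGT /P mulmxBr mulmxDr -!scalemxAr raddfB /= mxtraceD !mxtraceZ trGT.
  by field.
have dP : P^T - P = 2 *: skew_part K - (2 * beta) *: skew_part Z.
  apply/matrixP => i j; rewrite /P /skew_part !mxE.
  by field.
have dQ : g *m P^T *m g - g *m P *m g = 2 *: H1 - (2 * beta) *: H2.
  by rewrite -mulmxBl -mulmxBr dP mulmxBr mulmxBl /H1 /H2 -!scalemxAr -!scalemxAl.
have := contraction_mxtrace_le hE (psd_herm_conj pP hg) (psd_herm_conj (psd_trmx pP) hg).
rewrite dQ trQ mulmxBr -!scalemxAr raddfB /= !mxtraceZ EH1 => le_main.
have le_H2 := contraction_mxtrace_absmx_le hE hH2.
have absH2_ge0 := psd_mxtrace_ge0 (psd_absmx hH2).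
have le_H1 : \tr (absmx H1) <= \tr (G *m Z) - \tr (G *m K) + beta * \tr (E *m H2).
  by rewrite -lerBlDr -(ler_pM2l (ltr0n _ 2)) mulrBr mulrA.
rewrite /holevo_term -/g !trabs_herm_conj_Im // -/H1 -/H2.
apply: le_trans (lerD (lexx _) le_H1) _; rewrite addrA subrKC lerD2l.
exact: le_trans (ler_wpM2l beta_ge0 le_H2) (ler_piMl absH2_ge0 beta_le1).
Qed.

End HolevoTerm.

Definition inner_product (C : numClosedFieldType) (V : lmodType C) (form : V -> V -> C) :=
  [/\ forall x y z, form x (y + z) = form x y + form x z,
      forall x c y, form x (c *: y) = c * form x y,
      forall x y, (form x y)^* = form y x,
      forall x, 0 <= form x x
    & forall x, form x x = 0 -> x = 0].

Section Gram.
Variables (C : numClosedFieldType) (V : lmodType C) (form : V -> V -> C).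
Hypothesis form_inner : inner_product form.

Let innerDr := let: And5 h _ _ _ _ := form_inner in h.
Let innerZr := let: And5 _ h _ _ _ := form_inner in h.
Let innerC := let: And5 _ _ h _ _ := form_inner in h.
Let inner_ge0 := let: And5 _ _ _ h _ := form_inner in h.
Let inner_eq0 := let: And5 _ _ _ _ h := form_inner in h.

Lemma inner0r x : form x 0 = 0.
Proof. by have := innerZr x 0 0; rewrite scale0r mul0r. Qed.

Lemma inner0l y : form 0 y = 0.
Proof. by rewrite -innerC inner0r conjC0. Qed.

Lemma innerBr x y z : form x (y - z) = form x y - form x z.
Proof. by rewrite innerDr -scaleN1r innerZr mulN1r. Qed.

Lemma innerBl x y z : form (x - y) z = form x z - form y z.
Proof. by rewrite -innerC innerBr rmorphB /= !innerC. Qed.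

Lemma inner_sumr d x (e : 'I_d -> C) (y : 'I_d -> V) :
  form x (\sum_j e j *: y j) = \sum_j e j * form x (y j).
Proof. by elim/big_rec2: _ => [|j s t _ <-]; rewrite ?inner0r // innerDr innerZr. Qed.

Lemma inner_suml d (c : 'I_d -> C) (x : 'I_d -> V) y :
  form (\sum_i c i *: x i) y = \sum_i (c i)^* * form (x i) y.
Proof.
rewrite -innerC inner_sumr rmorph_sum; apply: eq_bigr => i _.
by rewrite rmorphM /= innerC.
Qed.

Definition gram d (x y : 'I_d -> V) : 'M[C]_d := \matrix_(i, j) form (x i) (y j).

Lemma inner_sum2E d (x y : 'I_d -> V) (u v : 'cV[C]_d) :
  form (\sum_i u i 0 *: x i) (\sum_j v j 0 *: y j) = (adj u *m gram x y *m v) 0 0.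
Proof.
rewrite sesq_formE inner_suml; apply: eq_bigr => i _.
rewrite inner_sumr big_distrr /=; apply: eq_bigr => j _.
by rewrite mxE mulrCA mulrC.
Qed.

Lemma adjmx_gram d (x y : 'I_d -> V) : adj (gram x y) = gram y x.
Proof. by apply/matrixP => i j; rewrite adjmxE !mxE innerC. Qed.

Section Biorthogonal.
Variables (d : nat) (x y : 'I_d -> V).
Hypothesis xy : gram x y = 1%:M.

(* For [u] in the left kernel of [gram x x], [z := \sum_i (u 0 i)^* *: x i] is
   orthogonal to every [x j], hence [z = 0], while [form z (y k) = u 0 k]. *)
Lemma gram_unit : gram x x \in unitmx.
Proof.
rewrite -row_free_unit -kermx_eq0; apply/eqP/row_matrixP => r; rewrite row0.
set u := row r _; have uJ : u *m gram x x = 0 by rewrite -row_mul mulmx_ker row0.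
set z := \sum_i (adj u) i 0 *: x i.
have formz w k : form z (w k) = (u *m gram x w) 0 k.
  by rewrite inner_suml mxE; apply: eq_bigr => i _; rewrite adjmxE conjCK !mxE.
have z0 : z = 0.
  apply: inner_eq0; rewrite {2}/z inner_sumr big1 // => j _.
  by rewrite formz uJ !mxE mulr0.
apply/rowP => k; have := formz y k; rewrite z0 inner0l xy mulmx1 => <-.
by rewrite mxE.
Qed.

(* Cauchy-Schwarz: [0 <= form (s - t) (s - t)] for [s = \sum_j u j *: y j] and
   [t = \sum_i (invmx (gram x x) *m u) i *: x i]. *)
Lemma gram_invmx_le : psd (gram y y - invmx (gram x x)).
Proof.
set K := invmx (gram x x).
have hK : adj K = K by rewrite adjmx_inv adjmx_gram.
have KJ : K *m gram x x = 1%:M by rewrite mulVmx ?gram_unit.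
split; first by rewrite /herm adjmxB adjmx_gram hK.
move=> u; set w := K *m u.
set s := \sum_j u j 0 *: y j; set t := \sum_i w i 0 *: x i.
have aw : adj w = adj u *m K by rewrite adjmxM hK.
have tt : form t t = (adj u *m K *m u) 0 0.
  by rewrite inner_sum2E aw /w !mulmxA -(mulmxA _ K (gram x x)) KJ mulmx1.
have ts : form t s = (adj u *m K *m u) 0 0 by rewrite inner_sum2E xy mulmx1 aw.
have st : form s t = (adj u *m K *m u) 0 0.
  by rewrite inner_sum2E -adjmx_gram xy adjmx1 mulmx1 /w mulmxA.
rewrite mulmxBr mulmxBl [X in _ <= X]mxE [X in _ + X]mxE.
have := inner_ge0 (s - t).
by rewrite innerBl !innerBr inner_sum2E tt ts st subrr subr0.
Qed.

End Biorthogonal.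
End Gram.

Lemma herm_Zmat (C : numClosedFieldType) n d (rho : 'M[C]_n) (B : 'I_d -> 'M[C]_n) :
  herm rho -> (forall j, herm (B j)) -> herm (Zmat rho B).
Proof.
move=> hrho hB; apply/matrixP => i j.
rewrite adjmxE !mxE -mxtrace_adjmx !adjmxM hrho hB hB.
by rewrite mulmxA mxtrace_mulC mulmxA.
Qed.

Section BetaForm.
Variables (C : numClosedFieldType) (n : nat) (rho : 'M[C]_n) (a b : C).
Hypotheses (rho_pos : posdef rho) (a_gt0 : 0 < a) (b_ge0 : 0 <= b).

Definition beta_form (X Y : 'M[C]_n) : C :=
  \tr ((a *: (adj X *m rho) + b *: (rho *m adj X)) *m Y).

Let hrho : herm rho := rho_pos.1.
Let a_real : a^* = a. Proof. exact/CrealP/gtr0_real. Qed.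
Let b_real : b^* = b. Proof. exact/CrealP/ger0_real. Qed.

Lemma beta_form_conj X Y : (beta_form X Y)^* = beta_form Y X.
Proof.
rewrite /beta_form -mxtrace_adjmx adjmxM adjmxD !adjmxZ !adjmxM adjmxK hrho a_real b_real.
rewrite mulmxDr mulmxDl -!scalemxAr -!scalemxAl !mxtraceD !mxtraceZ.
by rewrite mulmxA; congr (_ + b * _); rewrite mulmxA mxtrace_mulC mulmxA.
Qed.

Lemma beta_form_selfE X :
  beta_form X X = a * \tr (adj X *m rho *m X) + b * \tr (rho *m (adj X *m X)).
Proof. by rewrite /beta_form mulmxDl -!scalemxAl mxtraceD !mxtraceZ -!mulmxA. Qed.

Let rho_psd : psd rho := posdef_psd rho_pos.

Let conj_term_ge0 (X : 'M[C]_n) : 0 <= \tr (adj X *m rho *m X) :=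
  psd_mxtrace_ge0 (psd_adj_conj X rho_psd).
Let mul_term_ge0 (X : 'M[C]_n) : 0 <= \tr (rho *m (adj X *m X)) :=
  mxtrace_psd_mul_ge0 rho_psd (psd_adj_mulmx X).

Lemma beta_form_ge0 X : 0 <= beta_form X X.
Proof.
by rewrite beta_form_selfE addr_ge0 ?mulr_ge0 ?(ltW a_gt0) ?conj_term_ge0 ?mul_term_ge0.
Qed.

Lemma beta_form_eq0 X : beta_form X X = 0 -> X = 0.
Proof.
rewrite beta_form_selfE => /eqP.
rewrite paddr_eq0 ?mulr_ge0 ?(ltW a_gt0) ?conj_term_ge0 ?mul_term_ge0 //.
case/andP; rewrite mulf_eq0 (gt_eqF a_gt0) mxtrace_adj_conjE /= => /eqP tr0 _.
have col_ge0 k : 0 <= (adj (col k X) *m rho *m col k X) 0 0 := rho_psd.2 _.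
have colX0 k : col k X = 0.
  apply/eqP; apply: contraT => /rho_pos.2.
  by rewrite (psumr_eq0P (fun j _ => col_ge0 j) tr0) ?ltxx.
by apply/matrixP => i k; have /matrixP/(_ i 0) := colX0 k; rewrite !mxE.
Qed.

Lemma inner_product_beta_form : inner_product beta_form.
Proof.
split; [ by move=> X Y Z; rewrite /beta_form mulmxDr mxtraceD
       | by move=> X c Y; rewrite /beta_form -scalemxAr mxtraceZ
       | exact: beta_form_conj | exact: beta_form_ge0 | exact: beta_form_eq0 ].
Qed.

Lemma beta_form_Lbeta (D L : 'M[C]_n) : herm D ->
  D = a *: (rho *m L) + b *: (L *m rho) -> forall Y, beta_form L Y = \tr (D *m Y).
Proof.
move=> hD eD Y; rewrite /beta_form -[in RHS]hD eD adjmxD !adjmxZ !adjmxM hrho.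
by rewrite a_real b_real.
Qed.

Lemma gram_beta_form_Zmat d (B : 'I_d -> 'M[C]_n) : (forall j, herm (B j)) ->
  gram beta_form B B = a *: Zmat rho B + b *: (Zmat rho B)^T.
Proof.
move=> hB; apply/matrixP => i j; rewrite !mxE /beta_form hB mulmxDl -!scalemxAl.
by rewrite mxtraceD !mxtraceZ -[B i *m rho *m B j]mulmxA mxtrace_mulC.
Qed.

End BetaForm.

Theorem lemma5 (C : numClosedFieldType) (n d : nat)
    (rho : 'M[C]_n) (D L : 'I_d -> 'M[C]_n)
    (* ρ = ρ_{θ0} is a strictly positive density operator *)
    (Hrho : posdef rho) (Htr : \tr rho = 1)
    (* ∂_iρ : derivatives of a family of density operators *)
    (HDh : forall i, herm (D i)) (HDtr : forall i, \tr (D i) = 0)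
    (* SLDs, linearly independent *)
    (HL : forall i, is_SLD rho (D i) (L i)) (HLind : real_lin_indep L)
    (* D_ρ invariant extension of the SLD tangent space *)
    (Hinv : exists V : 'M[C]_n -> Prop, Dinv_extension rho L V)
    (* weight matrix: real positive d x d matrix *)
    (G : 'M[C]_d) (HGr : G \is a mxOver Num.real) (HG : psd G)
    (beta : C) (Hbeta : 0 <= beta <= 1)
    (Lb : 'I_d -> 'M[C]_n) (HLb : forall i, is_Lbeta beta rho (D i) (Lb i)) :
  (* C^(H) = min_B holevo_fun ≥ C^(β) *)
  forall B : 'I_d -> 'M[C]_n, holevo_feasible D B ->
    Cbeta G (Jmat D Lb) <= holevo_fun G rho B.
Proof.
move=> B [hB hDB]; have /andP [beta_ge0 beta_le1] := Hbeta.
set a := (1 + beta) / 2; set b := (1 - beta) / 2.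
have a_gt0 : 0 < a by rewrite divr_gt0 ?ltr0n // (lt_le_trans ltr01) // lerDl.
have b_ge0 : 0 <= b by rewrite divr_ge0 ?ler0n // subr_ge0.
have formL i Y : beta_form rho a b (Lb i) Y = \tr (D i *m Y).
  exact: (beta_form_Lbeta Hrho a_gt0 b_ge0 (HDh i) (HLb i)).
have J_gram : Jmat D Lb = gram (beta_form rho a b) Lb Lb.
  by apply/matrixP => i j; rewrite !mxE formL.
have biorth : gram (beta_form rho a b) Lb B = 1%:M.
  by apply/matrixP => i j; rewrite !mxE formL hDB.
have inner := inner_product_beta_form Hrho a_gt0 b_ge0.
have := gram_invmx_le inner biorth.
rewrite gram_beta_form_Zmat // -J_gram => ZK.
apply: (holevo_term_le HGr HG _ _ Hbeta ZK); first exact: herm_Zmat Hrho.1 hB.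
by rewrite /herm adjmx_inv J_gram (adjmx_gram inner).
Qed.
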